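(* Let $K\ge 1$ and let an instance of ring grooming be $K$-quasi-uniform, and let $d=\max_{j\ne k} d_{jk}$. Then the minimum number of ADMs satisfies $$m\ \ge\ \frac{(n^2-1)\sqrt{d/(2cK)}}{4}.$$
   Context: Ring grooming. An instance consists of integers $n\ge 2$ (ring size) and $c\ge 1$ (capacity), and a finite list $L$ of unordered pairs $\{j,k\}$ with $j\ne k$, $j,k\in\{1,\dots,n\}$ (repetitions allowed); these are the traffic demands. Let $d_{jk}=d_{kj}$ be the number of times $\{j,k\}$ occurs in $L$ (the traffic matrix; $d_{jj}=0$). Let $C_n$ be the cycle graph on vertices $1,\dots,n$ in cyclic order, with edges $\{l,l+1\}$ for $1\le l<n$ and $\{n,1\}$. A solution uses some finite number $r$ of ''rings'', each a copy of $C_n$ in which every edge has capacity $c$. A routing specifies, for every ring $i$ and every pair $j<k$, nonnegative integers $t^0_{ijk},t^1_{ijk}$: the amounts of $\{j,k\}$-traffic sent on ring $i$ along each of the two arcs of $C_n$ between $j$ and $k$. It is feasible if $\sum_i (t^0_{ijk}+t^1_{ijk})=d_{jk}$ for all $j<k$, and for every ring $i$ and every edge $e$ of $C_n$ the total traffic routed on ring $i$ along arcs containing $e$ is at most $c$. Ring $i$ needs an ADM (add/drop multiplexer) at vertex $j$ iff some traffic with endpoint $j$ is routed on ring $i$. The cost of a routing is the total number of ADMs, i.e. the number of pairs (ring $i$, vertex $j$) at which an ADM is needed. $m=m(n,c,L)$ denotes the minimum cost over all feasible routings. The instance is called $K$-quasi-uniform if $d_{jk}\ge 1$ for all $j\ne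 k$ and $d_{jk}/d_{j'k'}\le K$ for all $j\ne k$, $j'\ne k'$. *)

(* Ring grooming. Vertices of C_n are labelled 0..n-1
   (type 'I_n) instead of 1..n; edge l : 'I_n is the edge {l, l+1 mod n}. *)
From mathcomp Require Import all_boot all_order all_algebra.
Set Implicit Arguments. Unset Strict Implicit. Unset Printing Implicit Defensive.
Import Order.TTheory GRing.Theory Num.Theory.

Definition valid_demands (n : nat) (L : seq ('I_n * 'I_n)) : bool :=
  all (fun p => p.1 != p.2) L.

Definition dmat (n : nat) (L : seq ('I_n * 'I_n)) (j k : 'I_n) : nat :=
  count (fun p => (p == (j, k)) || (p == (k, j))) L.

Definition dmax (n : nat) (L : seq ('I_n * 'I_n)) : nat :=
  \max_(j : 'I_n) \max_(k : 'I_n | j != k) dmat L j k.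

(* For j < k, arc 0 between j and k is j, j+1, ..., k, i.e. it uses the edges
   l with j <= l < k; arc 1 is the complementary arc (all other edges). *)
Definition on_arc0 (n : nat) (j k l : 'I_n) : bool := (j <= l) && (l < k).

(* A routing on r rings: t0 i j k, t1 i j k (only used for j < k). *)
Definition load (n r : nat) (t0 t1 : 'I_r -> 'I_n -> 'I_n -> nat)
  (i : 'I_r) (l : 'I_n) : nat :=
  \sum_(j : 'I_n) \sum_(k : 'I_n | j < k)
     (if on_arc0 j k l then t0 i j k else t1 i j k).

Definition feasible (n c : nat) (L : seq ('I_n * 'I_n)) (r : nat)
  (t0 t1 : 'I_r -> 'I_n -> 'I_n -> nat) : Prop :=
  (forall j k : 'I_n, j < k -> \sum_(i < r) (t0 i j k + t1 i j k) = dmat L j k)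
  /\ (forall (i : 'I_r) (l : 'I_n), load t0 t1 i l <= c).

Definition needs_adm (n r : nat) (t0 t1 : 'I_r -> 'I_n -> 'I_n -> nat)
  (i : 'I_r) (j : 'I_n) : bool :=
  [exists k : 'I_n, ((j < k) && (0 < t0 i j k + t1 i j k))
                 || ((k < j) && (0 < t0 i k j + t1 i k j))].

Definition cost (n r : nat) (t0 t1 : 'I_r -> 'I_n -> 'I_n -> nat) : nat :=
  \sum_(i < r) #|[set j : 'I_n | needs_adm t0 t1 i j]|.

Definition quasi_uniform (R : numFieldType) (n : nat) (L : seq ('I_n * 'I_n))
  (K : R) : Prop :=
  (forall j k : 'I_n, j != k -> 1 <= dmat L j k)
  /\ (forall j k j' k' : 'I_n, j != k -> j' != k' ->
        ((dmat L j k)%:R / (dmat L j' k')%:R <= K)%R).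

From mathcomp Require Import all_boot all_order all_algebra.
From mathcomp Require Import zify ring lra.
Import Order.TTheory GRing.Theory Num.Theory.
Set Implicit Arguments. Unset Strict Implicit. Unset Printing Implicit Defensive.

(* On a ring with ADM set A, the |A| edges {u, u+1} with u in A carry total
   load at most c|A|.  A demand {j,k} routed on the ring loads the edge after
   each ADM on its arc, so its amount is counted at least
   g = min(#ADMs on arc 0, #ADMs on arc 1) times.  For fixed j in A, the ADM
   count on arc 0 strictly increases and the one on arc 1 strictly decreases
   as k runs over A, so at most 2(h-1) partners k have g < h.  Calling a pair
   short when some ring carrying it has g < h, this gives
     d0 (h n(n-1)/2 - (h-1) #short) <= c m   and   #short <= 2(h-1) m,
   where d0 = d/K bounds every demand from below.  Taking h = 1, or h with
   (h-1) sqrt(d/(2cK)) just below 1/2, or else the trivial bound m >= n,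
   yields the claim. *)

Lemma card_le_of_inj_bounded (T : finType) (h : nat) (S : {set T}) (f : T -> nat) :
  {in S &, injective f} -> (forall x, x \in S -> 0 < f x < h) -> #|S| <= h.-1.
Proof.
move=> f_inj f_rng; rewrite cardE -(size_map f).
have -> : h.-1 = size (iota 1 h.-1) by rewrite size_iota.
apply: uniq_leq_size.
  by rewrite map_inj_in_uniq ?enum_uniq // => x y; rewrite !mem_enum; exact: f_inj.
move=> x /mapP[y]; rewrite mem_enum => /f_rng /andP[fy_gt0 fy_lt] ->.
by rewrite mem_iota fy_gt0 add1n prednK // (leq_ltn_trans _ fy_lt).
Qed.

Lemma ord_inj_in_of_neq n (S : {pred 'I_n}) (f : 'I_n -> nat) :
  {in S &, forall x y : 'I_n, x < y -> f x != f y} -> {in S &, injective f}.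
Proof.
move=> f_neq x y xS yS fxy; case: (ltngtP x y) => [xy|yx|/val_inj//].
  by move/eqP: (f_neq x y xS yS xy).
by move: (f_neq y x yS xS yx); rewrite fxy eqxx.
Qed.

Lemma pairs_ord_mul2 n : (\sum_(j : 'I_n) \sum_(k : 'I_n | j < k) 1) * 2 = n * n.-1.
Proof.
have E : \sum_(j : 'I_n) \sum_(k : 'I_n | j < k) 1
         = \sum_(j : 'I_n) \sum_(k : 'I_n) (j < k : nat).
  by apply: eq_bigr => j _; rewrite big_mkcond; apply: eq_bigr => k _; case: ltnP.
rewrite muln2 -addnn {1}E E [X in _ + X]exchange_big -big_split /=.
rewrite -[n in n * _]card_ord -sum_nat_const; apply: eq_bigr => j _.
rewrite -big_split /= (bigD1 j) //= ltnn add0n.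
rewrite (eq_bigr (fun _ => 1)); last first.
  by move=> k kj; case: ltngtP => //= /val_inj jk; rewrite jk eqxx in kj.
by rewrite sum_nat_cond_const muln1 cardsE cardC1 card_ord.
Qed.

Section Routing.

Variables (n r : nat) (t0 t1 : 'I_r -> 'I_n -> 'I_n -> nat).

Definition adms (i : 'I_r) : {set 'I_n} := [set j | needs_adm t0 t1 i j].

Definition arc0_adms i (j k : 'I_n) := #|[set u in adms i | on_arc0 j k u]|.
Definition arc1_adms i (j k : 'I_n) := #|[set u in adms i | ~~ on_arc0 j k u]|.
Definition min_arc_adms i j k := minn (arc0_adms i j k) (arc1_adms i j k).

Lemma costE : cost t0 t1 = \sum_(i < r) #|adms i|.
Proof. by []. Qed.

Lemma adms_of_routed i (j k : 'I_n) :
  j < k -> 0 < t0 i j k + t1 i j k -> (j \in adms i) && (k \in adms i).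
Proof.
move=> jk routed; rewrite !inE; apply/andP; split; apply/existsP.
  by exists k; rewrite jk routed.
by exists j; rewrite jk routed orbT.
Qed.

Lemma arc0_adms_gt0 i (j k : 'I_n) : j \in adms i -> j < k -> 0 < arc0_adms i j k.
Proof.
by move=> jA jk; rewrite card_gt0; apply/set0Pn; exists j; rewrite inE jA /on_arc0 leqnn jk.
Qed.

Lemma arc1_adms_gt0 i (j k : 'I_n) : k \in adms i -> 0 < arc1_adms i j k.
Proof.
by move=> kA; rewrite card_gt0; apply/set0Pn; exists k; rewrite inE kA /on_arc0 ltnn andbF.
Qed.

Lemma min_arc_adms_gt0 i (j k : 'I_n) :
  j < k -> 0 < t0 i j k + t1 i j k -> 0 < min_arc_adms i j k.
Proof.
move=> jk /(adms_of_routed jk)/andP[jA kA].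
by rewrite leq_min arc0_adms_gt0 // arc1_adms_gt0.
Qed.

Lemma arc0_adms_ltr i (j k k' : 'I_n) :
  j <= k -> k \in adms i -> k < k' -> arc0_adms i j k < arc0_adms i j k'.
Proof.
move=> jk kA kk'; apply/proper_card/properP; split.
  apply/subsetP => u; rewrite !inE /on_arc0 => /andP[-> /andP[-> uk]] /=.
  exact: ltn_trans uk kk'.
exists k; first by rewrite inE kA /on_arc0 jk kk'.
by rewrite inE /on_arc0 ltnn !andbF.
Qed.

Lemma arc1_adms_ltl i (j k k' : 'I_n) :
  j <= k -> k \in adms i -> k < k' -> arc1_adms i j k' < arc1_adms i j k.
Proof.
move=> jk kA kk'; apply/proper_card/properP; split.
  apply/subsetP => u; rewrite !inE /on_arc0 => /andP[-> uk'] /=.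
  by apply: contra uk' => /andP[-> uk] /=; exact: ltn_trans uk kk'.
exists k; first by rewrite inE kA /on_arc0 ltnn andbF.
by rewrite inE /on_arc0 jk kk' andbF.
Qed.

Lemma load_adms_le c i : (forall l, load t0 t1 i l <= c) ->
  \sum_(j : 'I_n) \sum_(k : 'I_n | j < k) (t0 i j k + t1 i j k) * min_arc_adms i j k
    <= #|adms i| * c.
Proof.
move=> load_le.
apply: (@leq_trans (\sum_(u in adms i) load t0 t1 i u)); last first.
  by rewrite -sum_nat_const; apply: leq_sum => u _; apply: load_le.
rewrite /load exchange_big /=; apply: leq_sum => j _.
rewrite exchange_big /=; apply: leq_sum => k _.
rewrite (bigID (on_arc0 j k)) /=.
rewrite (eq_bigr (fun _ => t0 i j k)); last by move=> u /andP[_ ->].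
rewrite [\sum_(_ in _ | ~~ _) _](eq_bigr (fun _ => t1 i j k)); last first.
  by move=> u /andP[_ /negbTE ->].
rewrite !sum_nat_cond_const -/(arc0_adms i j k) -/(arc1_adms i j k).
by rewrite mulnDl leq_add // mulnC leq_mul2r ?geq_minl ?geq_minr orbT.
Qed.

Lemma short_partners_le i h (j : 'I_n) : j \in adms i ->
  \sum_(k : 'I_n | j < k) ((k \in adms i) && (min_arc_adms i j k < h) : nat)
    <= 2 * h.-1.
Proof.
move=> jA; set A := adms i.
apply: (@leq_trans (\sum_(k : 'I_n | j < k) (((k \in A) && (arc0_adms i j k < h) : nat)
                     + ((k \in A) && (arc1_adms i j k < h) : nat)))).
  apply: leq_sum => k _; rewrite /min_arc_adms gtn_min.
  by case: (k \in A); case: (arc0_adms i j k < h); case: (arc1_adms i j k < h).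
rewrite big_split /= mul2n -addnn.
have count_sum (P : pred 'I_n) : \sum_(k : 'I_n | j < k) ((k \in A) && P k : nat)
                                 = #|[set k : 'I_n | (j < k) && ((k \in A) && P k)]|.
  rewrite -sum1dep_card big_mkcondr /=.
  by apply: eq_bigr => k _; case: (_ && _).
rewrite !count_sum; apply: leq_add.
- apply: (@card_le_of_inj_bounded _ _ _ (arc0_adms i j)).
    apply: ord_inj_in_of_neq => x y; rewrite [x \in _]inE => /and3P[jx xA _] _ xy.
    by rewrite neq_ltn (arc0_adms_ltr (ltnW jx) xA xy).
  by move=> k; rewrite [k \in _]inE => /and3P[jk kA ->]; rewrite arc0_adms_gt0.
- apply: (@card_le_of_inj_bounded _ _ _ (arc1_adms i j)).
    apply: ord_inj_in_of_neq => x y; rewrite [x \in _]inE => /and3P[jx xA _] _ xy.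
    by rewrite neq_ltn (arc1_adms_ltl (ltnW jx) xA xy) orbT.
  by move=> k; rewrite [k \in _]inE => /and3P[jk kA ->]; rewrite arc1_adms_gt0.
Qed.

Lemma short_pairs_ring_le i h :
  \sum_(j : 'I_n) \sum_(k : 'I_n | j < k)
     ((j \in adms i) && (k \in adms i) && (min_arc_adms i j k < h) : nat)
  <= #|adms i| * (2 * h.-1).
Proof.
rewrite (bigID (mem (adms i))) /= [X in _ + X]big1 ?addn0; last first.
  by move=> j /negbTE jA; apply: big1 => k _; rewrite jA.
rewrite -sum_nat_const; apply: leq_sum => j jA.
by under eq_bigr do rewrite jA /=; apply: short_partners_le.
Qed.

Definition short_pair h (j k : 'I_n) :=
  [exists i, (0 < t0 i j k + t1 i j k) && (min_arc_adms i j k < h)].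

Lemma short_pairs_le_cost h :
  \sum_(j : 'I_n) \sum_(k : 'I_n | j < k) (short_pair h j k : nat)
    <= cost t0 t1 * (2 * h.-1).
Proof.
rewrite costE big_distrl /=.
apply: (leq_trans _ (leq_sum _ (fun i _ => short_pairs_ring_le i h))).
rewrite exchange_big /=; apply: leq_sum => j _.
rewrite exchange_big /=; apply: leq_sum => k jk.
case/boolP: (short_pair h j k) => //= /existsP[i /andP[routed short]].
have /andP[jA kA] := adms_of_routed jk routed.
by rewrite (bigD1 i) //= jA kA short.
Qed.

Lemma weighted_demand_le_cost c L h : feasible c L t0 t1 ->
  \sum_(j : 'I_n) \sum_(k : 'I_n | j < k)
     (if short_pair h j k then 1 else h) * dmat L j k <= cost t0 t1 * c.
Proof.
case=> demand_eq load_le; rewrite costE big_distrl /=.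
apply: (leq_trans _ (leq_sum _ (fun i _ => load_adms_le (load_le i)))).
rewrite exchange_big /=; apply: leq_sum => j _.
rewrite exchange_big /=; apply: leq_sum => k jk.
rewrite -demand_eq // big_distrr /=; apply: leq_sum => i _.
have [->|routed] := posnP (t0 i j k + t1 i j k); first by rewrite muln0.
have g_gt0 := min_arc_adms_gt0 jk routed.
case: ifP => [_|/negbT/existsPn/(_ i)]; first by rewrite mul1n leq_pmulr.
by rewrite negb_and routed /= -leqNgt mulnC leq_mul2l => ->; rewrite orbT.
Qed.

Lemma routed_of_demand c L (j k : 'I_n) : feasible c L t0 t1 ->
  j < k -> 0 < dmat L j k -> exists i, 0 < t0 i j k + t1 i j k.
Proof.
case=> demand_eq _ jk; rewrite -(demand_eq j k jk) lt0n sum_nat_eq0 negb_forall.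
by case/existsP=> i; rewrite -lt0n; exists i.
Qed.

Lemma n_le_cost c L : 2 <= n -> (forall j k : 'I_n, j != k -> 0 < dmat L j k) ->
  feasible c L t0 t1 -> n <= cost t0 t1.
Proof.
move=> n_ge2 dmat_gt0 feas.
have covered (j : 'I_n) : exists i, j \in adms i.
  have [k jk] : exists k : 'I_n, j != k.
    have [<-|ne] := eqVneq (Ordinal (ltnW n_ge2)) j.
      by exists (Ordinal n_ge2); rewrite -val_eqE.
    by exists (Ordinal (ltnW n_ge2)); rewrite eq_sym.
  case: (ltngtP j k) => [lt|gt|/val_inj eq]; last by rewrite eq eqxx in jk.
    have [i /(adms_of_routed lt)/andP[jA _]] := routed_of_demand feas lt (dmat_gt0 _ _ jk).
    by exists i.
  have kj : k != j by rewrite eq_sym.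
  have [i /(adms_of_routed gt)/andP[_ jA]] := routed_of_demand feas gt (dmat_gt0 _ _ kj).
  by exists i.
rewrite costE -[n in n <= _]card_ord -sum1_card.
under [X in _ <= X]eq_bigr do rewrite -sum1_card big_mkcond /=.
rewrite exchange_big /=; apply: leq_sum => j _.
by have [i jA] := covered j; rewrite (bigD1 i) //= jA.
Qed.

End Routing.

Local Open Scope ring_scope.

Lemma dmax_le_quasi_uniform (R : numFieldType) n (L : seq ('I_n * 'I_n)) (K : R)
    (j k : 'I_n) :
  0 < K -> quasi_uniform L K -> j != k -> (dmax L)%:R <= K * (dmat L j k)%:R.
Proof.
move=> K_gt0 [dmat_ge1 ratio_le] jk.
set B := K * (dmat L j k)%:R.
have maxn_le (x y : nat) : x%:R <= B -> y%:R <= B -> (maxn x y)%:R <= B.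
  by move=> x_le y_le; case: (leqP x y).
apply: (big_ind (fun x : nat => x%:R <= B)) => // [|j' _].
  by rewrite pmulr_rge0.
apply: (big_ind (fun x : nat => x%:R <= B)) => // [|k' jk'].
  by rewrite pmulr_rge0.
by rewrite -ler_pdivrMr ?ltr0n ?ratio_le ?dmat_ge1.
Qed.

Lemma demand_cost_tradeoff (R : realFieldType) n c r (L : seq ('I_n * 'I_n))
    (t0 t1 : 'I_r -> 'I_n -> 'I_n -> nat) (d0 : R) (h : nat) :
  feasible c L t0 t1 -> (forall j k : 'I_n, (j < k)%N -> d0 <= (dmat L j k)%:R) ->
  0 <= d0 -> (0 < h)%N ->
  d0 * (h%:R * (n%:R * n.-1%:R) / 2 - 2 * (h%:R - 1) ^+ 2 * (cost t0 t1)%:R)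
    <= c%:R * (cost t0 t1)%:R.
Proof.
move=> feas d0_le d0_ge0 h_gt0; set m := cost t0 t1.
set P := (\sum_(j : 'I_n) \sum_(k : 'I_n | (j < k)%N) 1)%N.
set S := (\sum_(j : 'I_n) \sum_(k : 'I_n | (j < k)%N) (short_pair t0 t1 h j k : nat))%N.
set W := (\sum_(j : 'I_n) \sum_(k : 'I_n | (j < k)%N)
            (if short_pair t0 t1 h j k then 1 else h))%N.
have hm1 : h.-1%:R = h%:R - 1 :> R by rewrite -[in RHS](prednK h_gt0) -natr1 addrK.
have W_eq : W%:R = h%:R * P%:R - (h%:R - 1) * S%:R :> R.
  have W_add : (W + h.-1 * S = h * P)%N.
    rewrite !big_distrr -big_split /=; apply: eq_bigr => j _.
    rewrite !big_distrr -big_split /=; apply: eq_bigr => k _.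
    by case: short_pair; rewrite ?muln1 ?muln0 ?addn0 // add1n prednK.
  by apply/eqP; rewrite eq_sym subr_eq -hm1 -!natrM -natrD W_add.
have P_eq : P%:R = n%:R * n.-1%:R / 2 :> R.
  by rewrite -natrM -pairs_ord_mul2 natrM mulfK ?pnatr_eq0.
have S_le : (h%:R - 1) * S%:R <= 2 * (h%:R - 1) ^+ 2 * m%:R :> R.
  have S_le_cost : (S <= m * (2 * h.-1))%N := short_pairs_le_cost t0 t1 h.
  by rewrite -hm1 -!natrM -natrX -!natrM ler_nat; nia.
have dW_le : d0 * W%:R <= c%:R * m%:R.
  apply: le_trans (_ : (\sum_(j : 'I_n) \sum_(k : 'I_n | (j < k)%N)
     ((if short_pair t0 t1 h j k then 1 else h) * dmat L j k))%N%:R <= _).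
    rewrite /W !natr_sum mulr_sumr; apply: ler_sum => j _.
    rewrite !natr_sum mulr_sumr; apply: ler_sum => k jk.
    by rewrite natrM mulrC ler_wpM2l // d0_le.
  by rewrite -natrM ler_nat mulnC weighted_demand_le_cost.
apply: le_trans dW_le; apply: ler_wpM2l d0_ge0 _ _ _.
rewrite W_eq P_eq; lra.
Qed.

Lemma exists_nat_mul_bracket (R : realFieldType) (x s : R) (N : nat) :
  0 <= x -> x < N%:R * s -> exists e : nat, e%:R * s <= x < e.+1%:R * s.
Proof.
move=> x_ge0; elim: N => [|N IH]; first by rewrite mul0r; lra.
by case: (lerP (N%:R * s) x) => [le lt|lt _]; [exists N; rewrite le lt | exact: IH].
Qed.

Lemma bracket_quadratic_le (R : realFieldType) (N s w : R) :
  2 <= N -> 0 < s -> 0 <= w <= 1/2 -> 1/2 < w + s ->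
  4 * N < s * (N ^+ 2 - 1) -> 4 * N * s < N + 1 ->
  (N + 1) * (1 + 4 * w ^+ 2) <= 4 * N * (w + s).
Proof.
move=> N_ge2 s_gt0 /andP[w_ge0 w_le] ws hA hB.
set v := 1/2 - w.
have v_sqr_le : v ^+ 2 <= s ^+ 2 by rewrite ler_sqr ?nnegrE /v; lra.
have s_sqr_le : N * (4 * (N + 1) * s ^+ 2) <= (N + 1) ^+ 2 * s by nra.
have N_le_s : 2 * N <= s * (N - 1) * (3 * N + 1) by nra.
have : 0 <= N * (4 * N * (w + s) - (N + 1) * (1 + 4 * w ^+ 2)).
  have -> : 4 * N * (w + s) - (N + 1) * (1 + 4 * w ^+ 2)
            = -2 + 4 * v + 4 * N * s - 4 * (N + 1) * v ^+ 2 by rewrite /v; field.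
  have Nv_ge0 : 0 <= N * v by rewrite mulr_ge0 /v //; lra.
  have : N * (4 * (N + 1) * v ^+ 2) <= N * (4 * (N + 1) * s ^+ 2).
    by rewrite ler_wpM2l ?ler_wpM2l //; lra.
  lra.
rewrite pmulr_rge0 ?subr_ge0 //; lra.
Qed.

Lemma cost_bound_of_tradeoff (R : realFieldType) (n : nat) (s M : R) :
  (2 <= n)%N -> 0 <= s -> n%:R <= M ->
  (forall h : nat, (0 < h)%N ->
     s ^+ 2 * (h%:R * (n%:R * (n%:R - 1)) - 4 * (h%:R - 1) ^+ 2 * M) <= M) ->
  (n%:R ^+ 2 - 1) * s / 4 <= M.
Proof.
move=> n_ge2 s_ge0 N_le_M tradeoff; set N : R := n%:R in N_le_M tradeoff *.
have N_ge2 : 2 <= N by rewrite (ler_nat R 2 n).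
have [hA|hA] := lerP (s * (N ^+ 2 - 1)) (4 * N); first by apply: le_trans N_le_M; lra.
have [hB|hB] := lerP (N + 1) (4 * N * s).
  have := tradeoff 1%N isT; rewrite subrr expr0n /= mulr0 mul0r subr0 mul1r.
  suff : (N ^+ 2 - 1) * s / 4 <= s ^+ 2 * (N * (N - 1)) by apply: le_trans.
  have : 0 <= (N - 1) * s * (4 * N * s - (N + 1)) by rewrite !mulr_ge0 //; lra.
  nra.
have s_gt0 : 0 < s by rewrite lt_neqAle s_ge0 andbT; apply: contraTneq hA => <-; lra.
have [e /andP[w_le w_gt]] : exists e : nat, e%:R * s <= 1/2 < e.+1%:R * s.
  by apply: (@exists_nat_mul_bracket _ _ _ n); rewrite -/N; nra.
set w := e%:R * s.
have ws : 1/2 < w + s by move: w_gt; rewrite /w -[e.+1%:R]natr1 mulrDl [1 * s]mul1r.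
have := tradeoff e.+1 isT; rewrite -[e.+1%:R]natr1 addrK -/w => step.
have w_ge0 : 0 <= w by rewrite mulr_ge0.
have quad := bracket_quadratic_le N_ge2 s_gt0 (introT andP (conj w_ge0 w_le)) ws hA hB.
have {}step : s * (w + s) * (N * (N - 1)) <= M * (1 + 4 * w ^+ 2).
  rewrite -subr_ge0 (_ : _ - _ = M - s ^+ 2 * ((e%:R + 1) * (N * (N - 1))
                                      - 4 * e%:R ^+ 2 * M)); first by rewrite subr_ge0.
  by rewrite /w; ring.
have Q_gt0 : 0 < 1 + 4 * w ^+ 2 by rewrite ltr_pwDl // mulr_ge0 // sqr_ge0.
rewrite -(ler_pM2r Q_gt0); apply: le_trans step.
have : 0 <= s * (N - 1) * (4 * N * (w + s) - (N + 1) * (1 + 4 * w ^+ 2)).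
  by rewrite !mulr_ge0 // ?subr_ge0 //; lra.
nra.
Qed.

Local Close Scope ring_scope.

Theorem corollary1 (R : rcfType) (n c : nat) (L : seq ('I_n * 'I_n)) (K : R) :
  2 <= n -> 1 <= c -> valid_demands L -> (1 <= K)%R -> quasi_uniform L K ->
  forall (r : nat) (t0 t1 : 'I_r -> 'I_n -> 'I_n -> nat),
    feasible c L t0 t1 ->
    (((n%:R ^+ 2 - 1) * Num.sqrt ((dmax L)%:R / (2 * c%:R * K))) / 4
       <= (cost t0 t1)%:R :> R)%R.
Proof.
move=> n_ge2 c_ge1 _ K_ge1 qu r t0 t1 feas.
have K_gt0 : (0 < K)%R := lt_le_trans ltr01 K_ge1.
have c_gt0 : (0 < c%:R :> R)%R by rewrite ltr0n.
set s := Num.sqrt _.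
have d0_eq : ((dmax L)%:R / K = 2 * c%:R * s ^+ 2)%R.
  rewrite sqr_sqrtr ?divr_ge0 ?mulr_ge0 ?ler0n ?ltW //; field.
  by rewrite gt_eqF ?gt_eqF.
apply: cost_bound_of_tradeoff => //; first exact: sqrtr_ge0.
  by rewrite ler_nat (n_le_cost n_ge2 _ feas) // => j k; apply: (proj1 qu).
move=> h h_gt0; rewrite -(ler_pM2l c_gt0).
have d0_le (j k : 'I_n) : j < k -> ((dmax L)%:R / K <= (dmat L j k)%:R)%R.
  by move=> jk; rewrite ler_pdivrMr // mulrC dmax_le_quasi_uniform // neq_ltn jk.
have := demand_cost_tradeoff feas d0_le (divr_ge0 (ler0n _ _) (ltW K_gt0)) h_gt0.
rewrite d0_eq -subn1 natrB ?(ltnW n_ge2) // => tradeoff.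
by apply: le_trans tradeoff; rewrite le_eqVlt; apply/predU1P; left; field.
Qed.
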